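(* Let $f:\mathbb{F}_q^k\to\mathrm{Im}(f)$ and integers $0\le t_d\le t_f$. Then: (i) for any $\{u_1,\dots,u_m\}\subseteq\mathbb{F}_q^k$, $r_f(k,t_d,t_f)\ge N(\mathcal{D}_f(t_d,t_f:u_1,\dots,u_m))$; (ii) if $|\mathrm{Im}(f)|\ge 2$, then $r_f(k,t_d,t_f)\ge 2t_f$; (iii) $r_f(k,t_d,t_f)\ge N(q^k,2t_d+1)-k$, where $N(M,d)$ denotes the minimum length of a $q$-ary code with $M$ codewords and minimum distance at least $d$.
   Context: $d(\cdot,\cdot)$ is Hamming distance. For $f:\mathbb{F}_q^k\to\mathrm{Im}(f)$ and integers $0\le d_d\le d_f$, an $(f\!:d_d,d_f)$-FCC with redundancy $r$ is a systematic encoding $\mathfrak{C}_f(u)=(u,p_u)\in\mathbb{F}_q^{k+r}$ with $d(\mathfrak{C}_f(u_1),\mathfrak{C}_f(u_2))\ge d_d$ whenever $u_1\ne u_2$ and $\ge d_f$ whenever $f(u_1)\ne f(u_2)$. $r_f(k,t_d,t_f)$ is the minimum $r$ for which an $(f\!:2t_d+1,2t_f+1)$-FCC with redundancy $r$ exists. $\mathcal{D}_f(t_d,t_f:u_1,\dots,u_M)$ is the $M\times M$ matrix with $(i,j)$ entry $\max(2t_d+1-d(u_i,u_j),0)$ if $u_i\ne u_j$ and $f(u_i)=f(u_j)$; $\max(2t_f+1-d(u_i,u_j),0)$ if $f(u_i)\ne f(u_j)$; $0$ otherwise. For a nonnegative integer matrix $\mathcal{D}$, $N(\mathcal{D})$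 is the least $r$ such that there are $p_1,\dots,p_M\in\mathbb{F}_q^r$ with $d(p_i,p_j)\ge[\mathcal{D}]_{i,j}$ for all $i,j$. *)

From Stdlib Require Import ClassicalEpsilon.
From mathcomp Require Import all_boot all_order all_algebra.
Set Implicit Arguments. Unset Strict Implicit. Unset Printing Implicit Defensive.

Section FCC.
Variable F : finFieldType.

Definition hamming (n : nat) (x y : 'rV[F]_n) : nat :=
  #|[pred i : 'I_n | x ord0 i != y ord0 i]|.

(* least natural number satisfying P (chosen by epsilon; it is the true
   minimum whenever some natural satisfies P) *)
Definition min_nat (P : nat -> Prop) : nat :=
  epsilon (inhabits 0%N) (fun r => P r /\ forall r', P r' -> (r <= r')%N).

(* (f : dd, df)-FCC with redundancy r: systematic encoding u |-> (u, p u) *)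
Definition is_FCC (k : nat) (Y : eqType) (f : 'rV[F]_k -> Y)
    (dd df r : nat) (p : 'rV[F]_k -> 'rV[F]_r) : Prop :=
  forall u1 u2 : 'rV[F]_k,
    (u1 != u2 -> (dd <= hamming (row_mx u1 (p u1)) (row_mx u2 (p u2)))%N) /\
    (f u1 != f u2 -> (df <= hamming (row_mx u1 (p u1)) (row_mx u2 (p u2)))%N).

Definition r_f (k : nat) (Y : eqType) (f : 'rV[F]_k -> Y) (td tf : nat) : nat :=
  min_nat (fun r => exists p : 'rV[F]_k -> 'rV[F]_r,
                      is_FCC f td.*2.+1 tf.*2.+1 p).

Definition N_mx (M : nat) (D : 'M[nat]_M) : nat :=
  min_nat (fun r => exists p : 'I_M -> 'rV[F]_r,
                      forall i j, (D i j <= hamming (p i) (p j))%N).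

Definition D_f (k : nat) (Y : eqType) (f : 'rV[F]_k -> Y) (td tf m : nat)
    (u : 'I_m -> 'rV[F]_k) : 'M[nat]_m :=
  \matrix_(i < m, j < m)
    if (u i != u j) && (f (u i) == f (u j)) then (td.*2.+1 - hamming (u i) (u j))%N
    else if f (u i) != f (u j) then (tf.*2.+1 - hamming (u i) (u j))%N
    else 0%N.

Definition N_code (M d : nat) : nat :=
  min_nat (fun n => exists c : 'I_M -> 'rV[F]_n,
                      forall i j, i != j -> (d <= hamming (c i) (c j))%N).

End FCC.

(* Every lower bound comes from one observation: an FCC with redundancy r is a
   family of parity vectors in F^r whose pairwise distances, together with the
   distances of the messages, meet the FCC requirements.
   (i)  The parities p(u_i) realise the distance matrix D_f, since
        d((u_i,p u_i),(u_j,p u_j)) = d(u_i,u_j) + d(p u_i,p u_j).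
   (ii) If f is not constant, changing one coordinate at a time from u to v
        with f u <> f v yields two messages at distance at most 1 with
        different function values; their parities must then be at distance at
        least 2 t_f, so r >= 2 t_f.
   (iii) The codewords (u, p u), u in F^k, form a code of q^k words, length
        k + r and minimum distance 2 t_d + 1.
   Existence of some FCC (a repetition code) makes r_f a genuine minimum. *)

From mathcomp Require Import all_boot all_order all_algebra.
From Stdlib Require Import Classical ClassicalEpsilon.

Set Implicit Arguments.
Unset Strict Implicit.
Unset Printing Implicit Defensive.

Section MinNat.
Variables (P : nat -> Prop) (r : nat).
Hypothesis Pr : P r.

Lemma ex_least_nat : exists m, P m /\ forall r', P r' -> (m <= r')%N.
Proof.
elim/ltn_ind: r Pr => n IH Pn.
have [[r' [lt_r'n Pr']]|no_smaller] := classic (exists r', (r' < n)%N /\ P r').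
  exact: IH lt_r'n Pr'.
exists n; split=> // r' Pr'; rewrite leqNgt; apply/negP => lt_r'n.
by apply: no_smaller; exists r'.
Qed.

Lemma min_natP : P (min_nat P) /\ forall r', P r' -> (min_nat P <= r')%N.
Proof. exact: epsilon_spec ex_least_nat. Qed.

Lemma min_nat_le : (min_nat P <= r)%N.
Proof. exact: (proj2 min_natP). Qed.

End MinNat.

Lemma exists_neq_succ (Y : eqType) (g : nat -> Y) n :
  g 0%N != g n -> exists2 j, (j < n)%N & g j != g j.+1.
Proof.
elim: n => [|n IH]; first by rewrite eqxx.
have [g_nS g0n|] := eqVneq (g n) (g n.+1); last by exists n.
by have [|j lt_jn] := IH; [rewrite g_nS | exists j => //; apply: ltnW].
Qed.

Section Hamming.
Variable F : finFieldType.

Lemma hamming_row_mx m n (a c : 'rV[F]_m) (b d : 'rV[F]_n) :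
  hamming (row_mx a b) (row_mx c d) = (hamming a c + hamming b d)%N.
Proof.
rewrite /hamming -!sum1_card big_split_ord /=.
by congr (_ + _)%N; apply: eq_bigl => i; rewrite !inE ?row_mxEl ?row_mxEr.
Qed.

Lemma hamming_le n (a b : 'rV[F]_n) : (hamming a b <= n)%N.
Proof. by rewrite /hamming (leq_trans (max_card _)) ?card_ord. Qed.

(* For j = 0, ..., k, [splice j u v] walks from [u] to [v] one coordinate at
   a time. *)
Definition splice k (j : nat) (u v : 'rV[F]_k) : 'rV[F]_k :=
  \row_i if (i < j)%N then v ord0 i else u ord0 i.

Lemma splice0 k (u v : 'rV[F]_k) : splice 0 u v = u.
Proof. by apply/rowP => i; rewrite mxE. Qed.

Lemma splice_full k (u v : 'rV[F]_k) : splice k u v = v.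
Proof. by apply/rowP => i; rewrite mxE ltn_ord. Qed.

Lemma hamming_spliceS k j (u v : 'rV[F]_k) :
  (hamming (splice j u v) (splice j.+1 u v) <= 1)%N.
Proof.
have differ_at_j (i : 'I_k) :
    splice j u v ord0 i != splice j.+1 u v ord0 i -> val i = j.
  by rewrite !mxE ltnS; case: ltngtP; rewrite ?eqxx.
apply/card_le1_eqP => i i' /differ_at_j d_i /differ_at_j d_i'.
by apply: val_inj; rewrite d_i d_i'.
Qed.

End Hamming.

Section FunctionCorrectingCodes.
Variables (F : finFieldType) (k : nat) (Y : eqType) (f : 'rV[F]_k -> Y).

Lemma codom_nonconstant :
  (2 <= size (undup (codom f)))%N -> exists u v, f u != f v.
Proof.
have := undup_uniq (codom f).
case E: (undup (codom f)) => [|a [|b s]] // + _.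
have /codomP[u ->] : a \in codom f by rewrite -mem_undup E inE eqxx.
have /codomP[v ->] : b \in codom f by rewrite -mem_undup E !inE eqxx orbT.
by rewrite /= inE negb_or => /andP[/andP[]]; exists u, v.
Qed.

Lemma nonconstant_neighbours u v :
  f u != f v -> exists u' v', (hamming u' v' <= 1)%N /\ f u' != f v'.
Proof.
move=> fuv; have [|j _ fj] := @exists_neq_succ Y (fun j => f (splice j u v)) k.
  by rewrite /= splice0 splice_full.
by exists (splice j u v), (splice j.+1 u v); rewrite hamming_spliceS.
Qed.

(* Parity: [df] copies of the message, so distinct messages are at distance
   more than [df]. *)
Lemma repetition_FCC dd df : (dd <= df)%N ->
  exists r (p : 'rV[F]_k -> 'rV[F]_r), is_FCC f dd df p.
Proof.
move=> le_dd_df; pose p (u : 'rV[F]_k) := mxvec (\matrix_(i < df, j < k) u ord0 j).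
have far u1 u2 : u1 != u2 -> (df <= hamming (row_mx u1 (p u1)) (row_mx u2 (p u2)))%N.
  move=> neq_u12.
  have [j0 neq_j0] : exists j, u1 ord0 j != u2 ord0 j.
    apply/existsP; apply: contraNT neq_u12 => /existsPn eq_u12.
    by apply/eqP/rowP => j; apply/eqP; rewrite -[_ == _]negbK eq_u12.
  rewrite hamming_row_mx (leq_trans _ (leq_addl _ _)) //.
  have inj_col : injective (fun i : 'I_df => mxvec_index i j0).
    by move=> a b /cast_ord_inj /enum_rank_inj [].
  rewrite -[X in (X <= _)%N]card_ord -(card_imset predT inj_col) subset_leq_card //.
  by apply/subsetP => _ /imsetP[i _ ->]; rewrite inE !mxvecE !mxE.
exists (df * k)%N, p => u1 u2; split=> [neq_u12|neq_f12].
  exact: leq_trans le_dd_df (far _ _ neq_u12).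
by apply: far; apply: contraNneq neq_f12 => ->.
Qed.

Lemma r_fP td tf : (td <= tf)%N ->
  exists p : 'rV[F]_k -> 'rV[F]_(r_f f td tf), is_FCC f td.*2.+1 tf.*2.+1 p.
Proof.
move=> le_td_tf; have le_dd_df : (td.*2.+1 <= tf.*2.+1)%N by rewrite ltnS leq_double.
have [r [p FCCp]] := repetition_FCC le_dd_df.
pose has_FCC r := exists p : 'rV[F]_k -> 'rV[F]_r, is_FCC f td.*2.+1 tf.*2.+1 p.
exact: (@min_natP has_FCC r (ex_intro _ p FCCp)).1.
Qed.

Section Redundancy.
Variables (dd df r : nat) (p : 'rV[F]_k -> 'rV[F]_r).
Hypothesis FCCp : is_FCC f dd df p.

Lemma FCC_redundancy_ge : (exists u v, f u != f v) -> (df <= r.+1)%N.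
Proof.
move=> [u [v /nonconstant_neighbours[u' [v' [near_uv f_uv]]]]].
have := (FCCp u' v').2 f_uv; rewrite hamming_row_mx => /leq_trans; apply.
by rewrite -add1n leq_add ?hamming_le.
Qed.

Lemma N_code_FCC_le : (N_code F (#|F| ^ k) dd <= k + r)%N.
Proof.
have cardE : #|{: 'rV[F]_k}| = (#|F| ^ k)%N by rewrite card_mx mul1n.
pose e (i : 'I_(#|F| ^ k)) : 'rV[F]_k := enum_val (cast_ord (esym cardE) i).
apply: min_nat_le; exists (fun i => row_mx (e i) (p (e i))) => i j neq_ij.
apply: (FCCp _ _).1; apply: contraNneq neq_ij => /enum_val_inj/cast_ord_inj ->.
exact: eqxx.
Qed.

End Redundancy.

Lemma N_mx_D_f_le td tf r (p : 'rV[F]_k -> 'rV[F]_r) m (u : 'I_m -> 'rV[F]_k) :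
  is_FCC f td.*2.+1 tf.*2.+1 p -> (N_mx F (D_f f td tf u) <= r)%N.
Proof.
move=> FCCp; apply: min_nat_le; exists (fun i => p (u i)) => i j; rewrite mxE.
have [] := FCCp (u i) (u j); rewrite hamming_row_mx => FCC_dd FCC_df.
case: ifP => [/andP[/FCC_dd + _]|_]; first by rewrite leq_subLR.
by case: ifP => // /FCC_df; rewrite leq_subLR.
Qed.

End FunctionCorrectingCodes.

Theorem theorem4 (F : finFieldType) (k : nat) (Y : eqType)
    (f : 'rV[F]_k -> Y) (td tf : nat) (htd : (td <= tf)%N) :
  (forall (m : nat) (u : 'I_m -> 'rV[F]_k),
      (N_mx F (D_f f td tf u) <= r_f f td tf)%N) /\
  ((2 <= size (undup (codom f)))%N -> (tf.*2 <= r_f f td tf)%N) /\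
  (N_code F (#|F| ^ k) td.*2.+1 - k <= r_f f td tf)%N.
Proof.
have [p FCCp] := r_fP f htd.
split; first by move=> m u; apply: N_mx_D_f_le FCCp.
split; last by rewrite leq_subLR; apply: N_code_FCC_le FCCp.
by move=> /codom_nonconstant; apply: FCC_redundancy_ge FCCp.
Qed.
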